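(* Let $S_A>0$, $c_{\mathrm{TX}}>0$, $\phi>0$, $\theta=\phi/c_{\mathrm{TX}}$, $B=1$, $0<\lambda<\lambda_{\mathrm{th}}=\left(\sqrt{1+1/S_A}+\sqrt{\theta}\right)^{-2}$, $v_{\mathrm{th}}(\lambda,0)=\sqrt{\lambda\theta}+\frac{\lambda}{2}+\sqrt{\lambda}\sqrt{\sqrt{\lambda\theta}+\frac{\lambda}{4}+\frac{1}{S_A}}$. For $V_k\in(0,1]$, $\zeta\geq0$, $S_M\geq0$ let $$f(\zeta,S_M,V_k)=\zeta e^{-\zeta}\frac{V_k}{1+V_k\frac{S_AS_M}{S_A+S_M}}+(1-\zeta e^{-\zeta})V_k+\lambda\zeta(1+\theta S_M),$$ and let the myopic policy $(\zeta^{(MP)}(V_k),S_M^{(MP)}(V_k))$ be a minimizer of $f(\cdot,\cdot,V_k)$ over $\zeta\geq0,S_M\geq0$ (with $S_M=0$ when $\zeta=0$). Then: (i) if $V_k\leq v_{\mathrm{th}}(\lambda,0)$, then $(\zeta^{(MP)}(V_k),S_M^{(MP)}(V_k))=(0,0)$; (ii) otherwise, $$S_M^{(MP)}(V_k)=\left(\frac{e^{-\zeta^{(MP)}(V_k)/2}}{\sqrt{\lambda\theta}}-\frac{1}{V_k}\right)\frac{V_kS_A}{1+V_kS_A},$$ and $\zeta^{(MP)}(V_k)$ is the unique $\zeta\in\left(0,\min\left\{1,2\ln\left(\frac{V_k}{\sqrt{\lambda\theta}}\right)\right\}\right)$ solving $$\frac{-V_kS_A}{1+V_kS_A}\left(V_k-e^{\zeta/2}\sqrt{\lambda\theta}\frac{2-\zeta}{1-\zeta}+\frac{e^{\zeta}}{1-\zeta}\frac{\lambda\theta}{V_k}\right)+\frac{\lambda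 e^{\zeta}}{1-\zeta}=0.$$
   Context: Decentralized sensing scheme with a single channel, in the large-network limit: $V_k$ is the fusion center's prior variance; $\zeta$ is the normalized activation probability; a transmission succeeds with probability $\zeta e^{-\zeta}$, in which case the posterior variance is $V_k/(1+V_k\frac{S_AS_M}{S_A+S_M})$ ($S_A$ ambient SNR, $S_M$ local measurement SNR), otherwise it is $V_k$; $\lambda$ is a Lagrange multiplier weighting the sensing-transmission cost. *)

From Stdlib Require Import Reals Lra.
Open Scope R_scope.

Definition theta (phi cTX : R) : R := phi / cTX.

Definition lambda_th (SA th : R) : R :=
  / ((sqrt (1 + / SA) + sqrt th) ^ 2).

Definition v_th (SA th lam : R) : R :=
  sqrt (lam * th) + lam / 2
  + sqrt lam * sqrt (sqrt (lam * th) + lam / 4 + / SA).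

Definition psucc (z : R) : R := z * exp (- z).

Definition fobj (SA th lam V z SM : R) : R :=
  psucc z * (V / (1 + V * (SA * SM / (SA + SM))))
  + (1 - psucc z) * V
  + lam * z * (1 + th * SM).

Definition is_myopic (SA th lam V z SM : R) : Prop :=
  0 <= z /\ 0 <= SM /\ (z = 0 -> SM = 0) /\
  (forall z' SM', 0 <= z' -> 0 <= SM' ->
     fobj SA th lam V z SM <= fobj SA th lam V z' SM').

Definition zeta_eq (SA th lam V z : R) : Prop :=
  - (V * SA) / (1 + V * SA) *
    (V - exp (z / 2) * sqrt (lam * th) * ((2 - z) / (1 - z))
       + exp z / (1 - z) * (lam * th / V))
  + lam * exp z / (1 - z) = 0.

Definition zeta_range (th lam V z : R) : Prop :=
  0 < z /\ z < Rmin 1 (2 * ln (V / sqrt (lam * th))).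

(* Write a = S_A, b = 1 + V a, s = sqrt (lam theta) and w = V exp (-zeta/2), so that
   exp (-zeta) V^2 = w^2.  Then f = V + zeta * rho (zeta, S_M), and completing the
   square in S_M gives
     b * rho = lam b - a (w - s)^2 + (s b S_M - a (w - s))^2 / (a + b S_M).
   So some transmission beats the idle value f(0,0) = V iff a (w - s)^2 > lam b for
   some zeta > 0; as w < V this happens iff a (V - s)^2 > lam b with V > s, which is
   exactly V > v_th.  In that case the minimiser uses the S_M that kills the square,
   and Fermat's rule in zeta reduces to a (w - s)((1 - zeta) w - s) = lam b, the
   stated equation multiplied out.  On the admissible range both factors are positive
   and decreasing in zeta, so the root is unique. *)

From Stdlib Require Import Reals Lra.
From Coquelicot Require Import Coquelicot.
Open Scope R_scope.

Lemma is_derive_interior_min (f : R -> R) (c l e : R) :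
  0 < e -> is_derive f c l ->
  (forall x, c - e < x -> x < c + e -> f c <= f x) -> l = 0.
Proof.
  intros He Hd Hmin. apply is_derive_Reals in Hd.
  exact (deriv_minimum f (c - e) (c + e) c (exist _ l Hd) ltac:(lra) ltac:(lra) Hmin).
Qed.

Lemma exp_neg_sq (z : R) : exp (- z) = exp (- z / 2) * exp (- z / 2).
Proof. rewrite <- exp_plus. f_equal. field. Qed.

Section MyopicPolicy.

Variables a th lam V : R.
Hypotheses (Ha : 0 < a) (Hth : 0 < th) (Hlam : 0 < lam) (HV : 0 < V).

Local Notation s := (sqrt (lam * th)).
Local Notation b := (1 + V * a).
Local Notation w z := (V * exp (- z / 2)).

Lemma sqrt_lam_th_gt0 : 0 < s.
Proof. apply sqrt_lt_R0. nra. Qed.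

Lemma sqrt_lam_th_sq : s * s = lam * th.
Proof. apply sqrt_sqrt. nra. Qed.

Lemma w_gt0 z : 0 < w z.
Proof. pose proof (exp_pos (- z / 2)). nra. Qed.

Lemma snr_denom_gt0 S : 0 <= S -> 0 < a + b * S.
Proof. intros HS. assert (0 <= V * a * S) by (apply Rmult_le_pos; nra). nra. Qed.

(* The variance reduction V - V / (1 + V a S / (a + S)) of a successful transmission. *)
Definition gain (S : R) : R := V * V * a * S / (a + b * S).

Definition tx_rate (z S : R) : R := lam * (1 + th * S) - exp (- z) * gain S.

Definition opt_snr (z : R) : R := a * (w z - s) / (s * b).

Definition psi (z : R) : R := (w z - s) * ((1 - z) * w z - s).

Lemma fobj_expand z S : 0 <= S -> fobj a th lam V z S = V + z * tx_rate z S.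
Proof.
  intros HS. unfold fobj, tx_rate, gain, psucc.
  assert (0 < a + S) by lra. pose proof (snr_denom_gt0 S HS) as HT.
  replace (1 + V * (a * S / (a + S))) with ((a + b * S) / (a + S)) by (field; lra).
  field. lra.
Qed.

Lemma fobj_derive z S : 0 <= S ->
  is_derive (fun z => fobj a th lam V z S) z
    (lam * (1 + th * S) - (1 - z) * exp (- z) * gain S).
Proof.
  intros HS. apply (is_derive_ext (fun z => V + z * tx_rate z S)).
  - intros t. rewrite fobj_expand; auto.
  - unfold tx_rate. auto_derive; auto. ring.
Qed.

Lemma tx_rate_w z S : 0 <= S ->
  tx_rate z S = lam + s * s * S - w z * w z * a * S / (a + b * S).
Proof.
  intros HS. pose proof (snr_denom_gt0 S HS) as HT.
  unfold tx_rate, gain. rewrite sqrt_lam_th_sq, exp_neg_sq. field. lra.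
Qed.

Lemma tx_rate_square z S : 0 <= S ->
  b * tx_rate z S = lam * b - a * (w z - s) ^ 2
                    + (s * b * S - a * (w z - s)) ^ 2 / (a + b * S).
Proof.
  intros HS. pose proof (snr_denom_gt0 S HS) as HT.
  rewrite tx_rate_w; auto. field. lra.
Qed.

Lemma tx_rate_ge_lam z S : 0 <= S -> w z <= s -> lam <= tx_rate z S.
Proof.
  intros HS Hw. pose proof (snr_denom_gt0 S HS) as HT.
  pose proof (w_gt0 z). pose proof sqrt_lam_th_gt0.
  rewrite tx_rate_w; auto.
  enough (w z * w z * a * S / (a + b * S) <= s * s * S) by lra.
  apply Rle_div_l; auto.
  assert (w z * w z <= s * s) by nra.
  assert (0 <= a * S) by nra.
  assert (0 <= s * s * S * (b * S)) by (repeat apply Rmult_le_pos; nra).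
  nra.
Qed.

Lemma tx_rate_ge z S : 0 <= S -> lam * b - a * (w z - s) ^ 2 <= b * tx_rate z S.
Proof.
  intros HS. pose proof (snr_denom_gt0 S HS) as HT.
  rewrite tx_rate_square; auto.
  enough (0 <= (s * b * S - a * (w z - s)) ^ 2 / (a + b * S)) by lra.
  apply Rdiv_le_0_compat; [apply pow2_ge_0 | lra].
Qed.

Lemma opt_snr_ge0 z : s <= w z -> 0 <= opt_snr z.
Proof.
  intros Hw. pose proof sqrt_lam_th_gt0.
  apply Rdiv_le_0_compat; [nra | apply Rmult_lt_0_compat; nra].
Qed.

Lemma tx_rate_opt z : s <= w z ->
  b * tx_rate z (opt_snr z) = lam * b - a * (w z - s) ^ 2.
Proof.
  intros Hw. pose proof sqrt_lam_th_gt0. pose proof (opt_snr_ge0 z Hw) as HS.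
  pose proof (snr_denom_gt0 _ HS).
  rewrite tx_rate_square by auto.
  replace (s * b * opt_snr z - a * (w z - s)) with 0 by (unfold opt_snr; field; split; nra).
  field. lra.
Qed.

Lemma tx_rate_le_opt z S : 0 <= S -> s <= w z ->
  tx_rate z S <= tx_rate z (opt_snr z) -> S = opt_snr z.
Proof.
  intros HS Hw Hle. pose proof sqrt_lam_th_gt0. pose proof (snr_denom_gt0 S HS) as HT.
  apply (Rmult_le_compat_l b) in Hle; [|nra].
  rewrite tx_rate_opt, tx_rate_square in Hle by auto.
  set (X := s * b * S - a * (w z - s)) in Hle.
  assert (HX2 : X ^ 2 = X ^ 2 / (a + b * S) * (a + b * S)) by (field; lra).
  assert (HX : X = 0) by nra.
  unfold opt_snr, X in *. field_simplify_eq; [nra | split; nra].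
Qed.

Lemma v_th_decomp :
  exists r, 0 <= r /\ r * r = lam * (s + lam / 4 + / a) /\
            v_th a th lam = s + lam / 2 + r.
Proof.
  pose proof sqrt_lam_th_gt0. pose proof (Rinv_0_lt_compat a Ha).
  exists (sqrt lam * sqrt (s + lam / 4 + / a)). repeat split.
  - apply Rmult_le_pos; apply sqrt_pos.
  - transitivity ((sqrt lam * sqrt lam) * (sqrt (s + lam / 4 + / a) * sqrt (s + lam / 4 + / a))).
    + ring.
    + rewrite !sqrt_sqrt; lra.
Qed.

Lemma sqrt_lam_th_lt_v_th : s < v_th a th lam.
Proof. destruct v_th_decomp as (r & Hr & _ & ->). lra. Qed.

(* [v_th] is the larger root of [a (V - s)^2 = lam (1 + V a)] in [V]. *)
Lemma le_v_th_iff : s < V -> (V <= v_th a th lam <-> a * (V - s) ^ 2 <= lam * b).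
Proof.
  intros HsV. destruct v_th_decomp as (r & Hr & Hr2 & ->).
  assert (lam * lam / 4 <= r * r).
  { rewrite Hr2. pose proof sqrt_lam_th_gt0. pose proof (Rinv_0_lt_compat a Ha). nra. }
  assert (Hr' : lam / 2 <= r) by nra.
  assert (Hb : lam * b = a * (lam * (V + / a))) by (field; lra).
  rewrite Hb. split; intros Hle.
  - apply Rmult_le_compat_l; nra.
  - apply Rmult_le_reg_l in Hle; nra.
Qed.

Lemma tx_rate_gt0 z S : (s < V -> a * (V - s) ^ 2 <= lam * b) ->
  0 < z -> 0 <= S -> 0 < tx_rate z S.
Proof.
  intros Hgap Hz HS. destruct (Rle_lt_dec (w z) s) as [Hw | Hw].
  - pose proof (tx_rate_ge_lam z S HS Hw). lra.
  - assert (w z < V).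
    { assert (exp (- z / 2) < 1) by (rewrite <- exp_0; apply exp_increasing; lra). nra. }
    assert ((w z - s) ^ 2 < (V - s) ^ 2) by nra.
    assert (a * (w z - s) ^ 2 < lam * b) by (pose proof (Hgap ltac:(lra)); nra).
    assert (0 < b) by nra. pose proof (tx_rate_ge z S HS). nra.
Qed.

Lemma tx_rate_opt_neg_exists : s < V -> lam * b < a * (V - s) ^ 2 ->
  exists z, 0 < z /\ s <= w z /\ tx_rate z (opt_snr z) < 0.
Proof.
  intros HsV Hgap. assert (Hb : 0 < b) by nra.
  set (sig := sqrt (lam * b / a)).
  assert (Hsig0 : 0 <= sig) by apply sqrt_pos.
  assert (Hsig2 : a * (sig * sig) = lam * b).
  { unfold sig. rewrite sqrt_sqrt; [field; lra | apply Rdiv_le_0_compat; nra]. }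
  assert (sig * sig < (V - s) ^ 2) by nra.
  assert (Hsig : sig < V - s) by nra.
  set (z := (V - s - sig) / V).
  assert (Hz : 0 < z) by (apply Rdiv_lt_0_compat; lra).
  (* [exp x >= 1 + x] keeps [w z] above [s + sig] for this step size *)
  assert (Hwz : s + sig < w z).
  { pose proof (exp_ineq1_le (- z / 2)).
    assert (V * (1 + - z / 2) <= w z) by (apply Rmult_le_compat_l; lra).
    assert (V * z = V - s - sig) by (unfold z; field; lra). lra. }
  exists z. repeat split; [lra | lra |].
  pose proof (tx_rate_opt z ltac:(lra)).
  assert (sig * sig < (w z - s) ^ 2) by nra.
  nra.
Qed.

Lemma opt_snr_stationary z : s < w z ->
  lam * (1 + th * opt_snr z) = (1 - z) * exp (- z) * gain (opt_snr z) ->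
  a * psi z = lam * b.
Proof.
  intros Hw Hst. pose proof sqrt_lam_th_gt0. pose proof (w_gt0 z).
  assert (Hb : 0 < b) by nra.
  assert (Hg : exp (- z) * gain (opt_snr z) = w z * s * opt_snr z).
  { unfold gain, opt_snr. rewrite exp_neg_sq. field. repeat split; nra. }
  assert (Hl : lam * (1 + th * opt_snr z) = lam + s * s * opt_snr z)
    by (rewrite sqrt_lam_th_sq; ring).
  assert (Hlam_eq : lam = s * opt_snr z * ((1 - z) * w z - s)).
  { rewrite Rmult_assoc, Hg in Hst. lra. }
  rewrite Hlam_eq. unfold psi, opt_snr. field. lra.
Qed.

Lemma lt_2ln_iff z : z < 2 * ln (V / s) <-> s < w z.
Proof.
  pose proof sqrt_lam_th_gt0. pose proof (exp_pos (z / 2)).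
  assert (HE : exp (z / 2) * exp (- z / 2) = 1).
  { rewrite <- exp_plus, <- exp_0. f_equal. field. }
  assert (HVs : 0 < V / s) by (apply Rdiv_lt_0_compat; lra).
  transitivity (exp (z / 2) < V / s).
  - split; intros Hlt.
    + rewrite <- (exp_ln (V / s)) by exact HVs. apply exp_increasing. lra.
    + apply ln_increasing in Hlt; [|apply exp_pos]. rewrite ln_exp in Hlt. lra.
  - split; intros Hlt.
    + apply (Rmult_lt_compat_r (s * exp (- z / 2))) in Hlt;
        [|apply Rmult_lt_0_compat; [lra | apply exp_pos]].
      replace (V / s * (s * exp (- z / 2))) with (w z) in Hlt by (field; lra).
      nra.
    + apply (Rmult_lt_reg_r (s * exp (- z / 2))); [apply Rmult_lt_0_compat; [lra | apply exp_pos]|].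
      replace (V / s * (s * exp (- z / 2))) with (w z) by (field; lra).
      nra.
Qed.

Lemma zeta_range_iff z : zeta_range th lam V z <-> 0 < z /\ z < 1 /\ s < w z.
Proof.
  unfold zeta_range. rewrite <- lt_2ln_iff. split.
  - intros [Hz Hmin]. repeat split; auto.
    + apply Rlt_le_trans with (1 := Hmin). apply Rmin_l.
    + apply Rlt_le_trans with (1 := Hmin). apply Rmin_r.
  - intros (Hz & Hz1 & Hln). split; [auto | apply Rmin_glb_lt; auto].
Qed.

Lemma zeta_eq_iff z : z < 1 -> (zeta_eq a th lam V z <-> a * psi z = lam * b).
Proof.
  intros Hz. pose proof sqrt_lam_th_gt0. assert (Hb : 0 < b) by nra.
  unfold zeta_eq. rewrite <- sqrt_lam_th_sq at 2.
  set (E := exp (z / 2)). assert (HE : 0 < E) by apply exp_pos.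
  assert (Hm : exp (- z / 2) = / E).
  { unfold E. rewrite <- exp_Ropp. f_equal. field. }
  assert (Hz2 : exp z = E * E) by (unfold E; rewrite <- exp_plus; f_equal; field).
  assert (Hid : - (V * a) / b *
      (V - E * s * ((2 - z) / (1 - z)) + E * E / (1 - z) * (s * s / V))
      + lam * (E * E) / (1 - z)
    = E * E / ((1 - z) * b) * (lam * b - a * psi z)).
  { unfold psi. rewrite Hm. field. repeat split; lra. }
  rewrite Hz2, Hid.
  assert (0 < E * E / ((1 - z) * b)) by (apply Rdiv_lt_0_compat; nra).
  split; intros Heq.
  - apply Rmult_integral in Heq as [|]; lra.
  - rewrite Heq. ring.
Qed.

Lemma psi_decreasing z1 z2 : 0 <= z1 -> z1 < z2 -> z2 < 1 ->
  s < (1 - z2) * w z2 -> psi z2 < psi z1.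
Proof.
  intros Hz1 H12 Hz2 Hc. pose proof sqrt_lam_th_gt0. pose proof (w_gt0 z2).
  assert (Hw : w z2 < w z1).
  { apply Rmult_lt_compat_l; [lra | apply exp_increasing; lra]. }
  assert (s < w z2) by nra.
  assert ((1 - z2) * w z2 < (1 - z1) * w z1) by nra.
  unfold psi. nra.
Qed.

Lemma stationary_margin z : s < w z -> a * psi z = lam * b -> s < (1 - z) * w z.
Proof.
  intros Hw Hst. unfold psi in Hst.
  assert (0 < lam * b) by (apply Rmult_lt_0_compat; nra).
  assert (0 < (w z - s) * ((1 - z) * w z - s)) by nra.
  nra.
Qed.

Lemma stationary_unique z1 z2 :
  zeta_range th lam V z1 -> zeta_range th lam V z2 ->
  a * psi z1 = lam * b -> a * psi z2 = lam * b -> z1 = z2.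
Proof.
  rewrite !zeta_range_iff. intros (H1 & H1' & Hw1) (H2 & H2' & Hw2) Hst1 Hst2.
  destruct (Rtotal_order z1 z2) as [H12 | [H12 | H12]]; auto; exfalso.
  - pose proof (psi_decreasing z1 z2 ltac:(lra) H12 H2' (stationary_margin z2 Hw2 Hst2)).
    nra.
  - pose proof (psi_decreasing z2 z1 ltac:(lra) H12 H1' (stationary_margin z1 Hw1 Hst1)).
    nra.
Qed.

Lemma myopic_idle z S : is_myopic a th lam V z S -> V <= v_th a th lam ->
  z = 0 /\ S = 0.
Proof.
  intros (Hz & HS & Hz0 & Hmin) Hle.
  destruct (Rle_lt_or_eq_dec 0 z Hz) as [Hzp | Hze]; [exfalso | auto].
  assert (Hgap : s < V -> a * (V - s) ^ 2 <= lam * b)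
    by (intros HsV; apply le_v_th_iff; auto).
  pose proof (tx_rate_gt0 z S Hgap Hzp HS).
  pose proof (Hmin 0 0 (Rle_refl 0) (Rle_refl 0)) as H00.
  rewrite !fobj_expand in H00 by lra. nra.
Qed.

Lemma myopic_rate_neg z S : is_myopic a th lam V z S -> v_th a th lam < V ->
  0 < z /\ tx_rate z S < 0.
Proof.
  intros (Hz & HS & _ & Hmin) Hgt.
  pose proof sqrt_lam_th_lt_v_th.
  assert (HsV : s < V) by lra.
  assert (Hgap : lam * b < a * (V - s) ^ 2).
  { apply Rnot_le_lt. rewrite <- le_v_th_iff; lra. }
  destruct (tx_rate_opt_neg_exists HsV Hgap) as (z0 & Hz0 & Hw0 & Hneg).
  pose proof (Hmin z0 (opt_snr z0) ltac:(lra) (opt_snr_ge0 z0 Hw0)) as Hle.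
  rewrite !fobj_expand in Hle by (auto; apply opt_snr_ge0; auto).
  assert (Hzt : z * tx_rate z S < 0) by nra.
  destruct (Rle_lt_or_eq_dec 0 z Hz) as [Hzp | Hze].
  - split; nra.
  - subst z. lra.
Qed.

Lemma myopic_active z S : is_myopic a th lam V z S -> v_th a th lam < V ->
  0 < z /\ z < 1 /\ s < w z /\ S = opt_snr z /\ a * psi z = lam * b.
Proof.
  intros Hmy Hgt. destruct (myopic_rate_neg z S Hmy Hgt) as [Hz Hneg].
  destruct Hmy as (_ & HS & _ & Hmin).
  assert (Hw : s < w z).
  { apply Rnot_le_lt. intros Hw. pose proof (tx_rate_ge_lam z S HS Hw). lra. }
  assert (HSopt : S = opt_snr z).
  { apply tx_rate_le_opt; auto; [lra|].
    pose proof (Hmin z (opt_snr z) ltac:(lra) (opt_snr_ge0 z ltac:(lra))) as Hle.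
    rewrite !fobj_expand in Hle by (auto; apply opt_snr_ge0; lra).
    apply Rmult_le_reg_l with z; lra. }
  assert (Hst : lam * (1 + th * S) - (1 - z) * exp (- z) * gain S = 0).
  { apply (is_derive_interior_min (fun x => fobj a th lam V x S) z _ z Hz).
    - apply fobj_derive; auto.
    - intros x Hx _. apply Hmin; lra. }
  subst S. assert (Hpsi : a * psi z = lam * b) by (apply opt_snr_stationary; lra).
  pose proof (stationary_margin z Hw Hpsi). pose proof sqrt_lam_th_gt0.
  repeat split; auto. nra.
Qed.

End MyopicPolicy.

Theorem corollary2 (SA cTX phi lam V zMP SMP : R) :
  0 < SA -> 0 < cTX -> 0 < phi ->
  0 < lam -> lam < lambda_th SA (theta phi cTX) ->
  0 < V -> V <= 1 ->
  is_myopic SA (theta phi cTX) lam V zMP SMP ->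
  (V <= v_th SA (theta phi cTX) lam -> zMP = 0 /\ SMP = 0) /\
  (v_th SA (theta phi cTX) lam < V ->
     SMP = (exp (- zMP / 2) / sqrt (lam * theta phi cTX) - / V)
           * (V * SA / (1 + V * SA))
     /\ zeta_range (theta phi cTX) lam V zMP
     /\ zeta_eq SA (theta phi cTX) lam V zMP
     /\ (forall z, zeta_range (theta phi cTX) lam V z ->
                   zeta_eq SA (theta phi cTX) lam V z -> z = zMP)).
Proof.
  (* [lam < lambda_th] and [V <= 1] only make case (ii) reachable (they amount to
     [v_th < 1]); the characterisation itself does not need them. *)
  intros Ha HcTX Hphi Hlam _ HV _ Hmy.
  assert (Hth : 0 < theta phi cTX) by (apply Rdiv_lt_0_compat; auto).
  split; [apply myopic_idle; auto |].
  intros Hgt.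
  destruct (myopic_active SA (theta phi cTX) lam V Ha Hth Hlam HV zMP SMP Hmy Hgt)
    as (Hz & Hz1 & Hw & HS & Hpsi).
  assert (Hrange : zeta_range (theta phi cTX) lam V zMP) by (apply zeta_range_iff; auto).
  split; [| split; [exact Hrange | split]].
  - rewrite HS. unfold opt_snr. pose proof (sqrt_lam_th_gt0 _ _ Hth Hlam). field. nra.
  - apply zeta_eq_iff; auto.
  - intros z Hr Heq. apply (stationary_unique SA (theta phi cTX) lam V); auto.
    apply zeta_eq_iff; auto. apply zeta_range_iff in Hr; lra.
Qed.
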